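(* Let $k$ be a positive integer and $\alpha \in (0,1]$. If $\frac{\alpha}{1 - \ln \alpha} \geq \frac{2}{k + 1}$, then in any election there exists an $\alpha$-undominated committee of size $k$.
   Context: An election consists of a finite set $V$ of $n$ voters, a finite set $C$ of $m$ candidates, and for each voter $v$ a strict linear order $\succ_v$ on $C$ (her preference ranking). A committee is a subset $S \subseteq C$. For a candidate $a$ and committee $S$, write $a \succ_v S$ if $v$ prefers $a$ to every member of $S$, and let $\frac1n|a \succ S| = \frac1n|\{v \in V : a \succ_v S\}|$ (this is $0$ if $a \in S$). A committee $S$ is $\alpha$-undominated if for every candidate $a \in C$, $\frac1n|a \succ S| < \alpha$. *)

From HB Require Import structures.
From mathcomp Require Import all_boot all_order all_algebra.
From mathcomp Require Import all_classical all_reals all_analysis.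
Set Implicit Arguments. Unset Strict Implicit. Unset Printing Implicit Defensive.
Import Order.TTheory GRing.Theory Num.Theory.
Local Open Scope ring_scope.

(* A strict linear order on a finite type, given as a boolean relation
   [lt a b] meaning "a is strictly preferred to b". *)
Definition strict_linear_order (C : finType) (lt : rel C) : Prop :=
  [/\ irreflexive lt, transitive lt &
      (forall a b : C, a != b -> lt a b || lt b a)].

Definition election (V C : finType) (pref : V -> rel C) : Prop :=
  forall v : V, strict_linear_order (pref v).

Definition prefers_to_all (C : finType) (lt : rel C) (a : C) (S : {set C}) : bool :=
  [forall b in S, lt a b].

Definition dom_frac (R : realType) (V C : finType) (pref : V -> rel C)
    (a : C) (S : {set C}) : R :=
  #|[set v : V | prefers_to_all (pref v) a S]|%:R / #|V|%:R.

Definition undominated (R : realType) (V C : finType) (pref : V -> rel C)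
    (alpha : R) (S : {set C}) : Prop :=
  forall a : C, @dom_frac R V C pref a S < alpha.

(* By von Neumann's minimax theorem (derived here from Farkas' lemma by
   Fourier-Motzkin elimination) there is a lottery p over the candidates such
   that for every candidate a and every set T of t voters, the p-masses of the
   candidates that the voters of T rank below a add up to at most
   t - t^2/(2n): against a mixed choice of (a, T), the marginal distribution
   of a is a good enough reply.
   Now draw k candidates independently from p.  The excess of a committee S
   for a voter is the amount by which the p-mass of the candidates he prefers
   to all of S exceeds 1 - x; its expectation is at most x^(k+1)/(k+1), so
   some committee S0 has total excess at most n x^(k+1)/(k+1).  Each voter
   preferring a to S0 ranks p-mass at least x minus his excess below a, so if
   t >= alpha n of them did, then t^2/(2n) <= t(1 - x) + n x^(k+1)/(k+1).
   For x = alpha^(1/k) this contradicts the hypothesis on alpha, because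
   1 - x < - ln alpha / k.  Padding S0 to k candidates keeps it undominated. *)

From mathcomp Require Import all_boot all_order all_algebra.
From mathcomp Require Import reals sequences exp.
From mathcomp Require Import ring lra.
Set Implicit Arguments. Unset Strict Implicit. Unset Printing Implicit Defensive.
Import Order.TTheory GRing.Theory Num.Theory.
Local Open Scope ring_scope.
Section LinearDuality.
Variable R : realFieldType.

Lemma sum_delta_mul (I : finType) (i0 : I) (u : R) (F : I -> R) :
  \sum_i (if i == i0 then u else 0) * F i = u * F i0.
Proof.
by rewrite (bigD1 i0) //= eqxx big1 ?addr0 // => i /negbTE ->; rewrite mul0r.
Qed.

Lemma ex_between (I : finType) (P N : pred I) (lo hi : I -> R) :
  (forall i j, P i -> N j -> lo j <= hi i) ->
  exists z, (forall j, N j -> lo j <= z) /\ (forall i, P i -> z <= hi i).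
Proof.
move=> lo_hi; case: (pickP N) => [j0 Nj0|N0].
  have [jm Njm lo_jm] := arg_maxP lo Nj0.
  by exists (lo jm); split => [j /lo_jm | i /lo_hi]; apply.
case: (pickP P) => [i0 Pi0|P0].
  have [im Pim hi_im] := arg_minP hi Pi0.
  by exists (hi im); split => [j | i /hi_im]; rewrite ?N0.
by exists 0; split => [j|i]; rewrite ?N0 ?P0.
Qed.

(* Fourier-Motzkin elimination of the last variable, whose coefficients in the
   rows are [a]: keep each row [inl i] with [a i = 0], and for each row [i0]
   with [a i0 > 0] and each row [j0] with [a j0 < 0] add the nonnegative
   combination [inr (i0, j0)] of the two rows that cancels that variable. *)
Definition fm_coef (I : finType) (a : I -> R) (i' : I + I * I) (i : I) : R :=
  match i' with
  | inl i0 => if (a i0 == 0) && (i == i0) then 1 else 0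
  | inr (i0, j0) => if (0 < a i0) && (a j0 < 0) then
       (if i == i0 then - a j0 else 0) + (if i == j0 then a i0 else 0) else 0
  end.

Definition fm_rows (I : finType) (a F : I -> R) (i' : I + I * I) : R :=
  \sum_i fm_coef a i' i * F i.

Lemma fm_coef_ge0 (I : finType) (a : I -> R) i' i : 0 <= fm_coef a i' i.
Proof.
case: i' => [i0|[i0 j0]] /=; first by case: ifP.
case: ifP => // /andP[a_i0 a_j0].
by apply: addr_ge0; case: ifP => // _; rewrite ?oppr_ge0; apply: ltW.
Qed.

Lemma fm_rowsE (I : finType) (a F : I -> R) i' :
  fm_rows a F i' =
  match i' with
  | inl i0 => if a i0 == 0 then F i0 else 0
  | inr (i0, j0) => if (0 < a i0) && (a j0 < 0) then - a j0 * F i0 + a i0 * F j0 else 0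
  end.
Proof.
rewrite /fm_rows; case: i' => [i0|[i0 j0]] /=.
  case: eqP => _ /=; last by rewrite big1 // => i _; rewrite mul0r.
  by rewrite -[F i0]mul1r -(sum_delta_mul i0 1 F).
case: ifP => _; last by rewrite big1 // => i _; rewrite mul0r.
rewrite -(sum_delta_mul i0 (- a j0) F) -(sum_delta_mul j0 (a i0) F) -big_split.
by apply: eq_bigr => i _; rewrite mulrDl.
Qed.

Lemma fm_rows_elim (I : finType) (a : I -> R) i' : fm_rows a a i' = 0.
Proof.
rewrite fm_rowsE; case: i' => [i0|[i0 j0]]; first by case: eqP.
by case: ifP => // _; rewrite mulNr [a j0 * _]mulrC addNr.
Qed.

Lemma fm_rows_affine (I K : finType) (a F : I -> R) (G : I -> K -> R) (x : K -> R) i' :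
  fm_rows a (fun i => F i - \sum_k G i k * x k) i'
  = fm_rows a F i' - \sum_k fm_rows a (G^~ k) i' * x k.
Proof.
rewrite /fm_rows; under eq_bigr do rewrite mulrBr mulr_sumr.
rewrite sumrB exchange_big /=; congr (_ - _); apply: eq_bigr => k _.
by rewrite mulr_suml; apply: eq_bigr => i _; rewrite mulrA.
Qed.

Lemma sum_fm_dual (I : finType) (a : I -> R) (y' : I + I * I -> R) (F : I -> R) :
  \sum_i (\sum_i' y' i' * fm_coef a i' i) * F i = \sum_i' y' i' * fm_rows a F i'.
Proof.
under eq_bigr do rewrite mulr_suml.
rewrite exchange_big; apply: eq_bigr => i' _.
by rewrite /fm_rows mulr_sumr; apply: eq_bigr => i _; rewrite mulrA.
Qed.

Lemma ratio_le (ri rj ai aj : R) :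
  0 < ai -> aj < 0 -> 0 <= - aj * ri + ai * rj -> rj / aj <= ri / ai.
Proof.
move=> ai_gt0 aj_lt0 comb_ge0; rewrite -subr_ge0.
have -> : ri / ai - rj / aj = (- aj * ri + ai * rj) / (ai * - aj)
  by field; rewrite ltr0_neq0 ?gt_eqF.
by apply: divr_ge0 => //; apply: mulr_ge0; rewrite ?oppr_ge0 ltW.
Qed.

Section FourierMotzkinStep.
Variables (d : nat) (I : finType) (A : I -> 'I_d.+1 -> R) (b : I -> R).
Let a i := A i ord_max.
Let A' i k := A i (lift ord_max k).

Lemma fm_lift_primal (x' : 'I_d -> R) :
  (forall i', \sum_k fm_rows a (A'^~ k) i' * x' k <= fm_rows a b i') ->
  exists x, forall i, \sum_k A i k * x k <= b i.
Proof.
pose r i := b i - \sum_k A' i k * x' k.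
move=> hx'; have r_ge0 i' : 0 <= fm_rows a r i'.
  by rewrite fm_rows_affine subr_ge0.
have [z [z_ge z_le]] : exists z, (forall j, a j < 0 -> r j / a j <= z) /\
                                 (forall i, 0 < a i -> z <= r i / a i).
  apply: ex_between => i j ai_gt0 aj_lt0; apply: ratio_le => //.
  by have := r_ge0 (inr (i, j)); rewrite fm_rowsE ai_gt0 aj_lt0.
exists (fun k => if unlift ord_max k is Some k' then x' k' else z) => i.
rewrite (bigD1_ord ord_max) //= unlift_none.
under eq_bigr do rewrite liftK.
rewrite addrC -lerBrDl -/(r i) -/(a i) mulrC.
case: (ltrgtP (a i) 0) => [ai_lt0|ai_gt0|ai0].
- by rewrite -ler_ndivrMr // z_ge.
- by rewrite -ler_pdivlMr // z_le.
- by rewrite ai0 mulr0; have := r_ge0 (inl i); rewrite fm_rowsE ai0 eqxx.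
Qed.

Lemma fm_lift_dual (y' : I + I * I -> R) :
  (forall i', 0 <= y' i') -> (forall k, \sum_i' y' i' * fm_rows a (A'^~ k) i' = 0) ->
  \sum_i' y' i' * fm_rows a b i' < 0 ->
  exists y : I -> R, [/\ forall i, 0 <= y i, forall k, \sum_i y i * A i k = 0
                       & \sum_i y i * b i < 0].
Proof.
move=> y'_ge0 y'A y'b.
exists (fun i => \sum_i' y' i' * fm_coef a i' i); split.
- by move=> i; apply: sumr_ge0 => i' _; rewrite mulr_ge0 ?fm_coef_ge0.
- move=> k; rewrite (sum_fm_dual _ _ (A^~ k)).
  case: (unliftP ord_max k) => [k'|] ->; first exact: y'A.
  by rewrite big1 // => i' _; rewrite fm_rows_elim mulr0.
- by rewrite sum_fm_dual.
Qed.

End FourierMotzkinStep.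

Lemma farkas_ord (d : nat) (I : finType) (A : I -> 'I_d -> R) (b : I -> R) :
  (exists x, forall i, \sum_k A i k * x k <= b i) \/
  (exists y : I -> R, [/\ forall i, 0 <= y i, forall k, \sum_i y i * A i k = 0
                        & \sum_i y i * b i < 0]).
Proof.
elim: d I A b => [|d IHd] I A b.
  have [b_ge0|/forallPn[i0]] := boolP [forall i, 0 <= b i].
    by left; exists (fun _ => 0) => i; rewrite big_ord0 (forallP b_ge0).
  rewrite -ltNge => bi0_lt0; right; exists (fun i => if i == i0 then 1 else 0).
  by split => [i|[]//|]; rewrite ?sum_delta_mul ?mul1r //; case: ifP.
have [[x' hx']|[y' [y'_ge0 y'A y'b]]] := IHd _
  (fun i' k => fm_rows (A^~ ord_max) (fun i => A i (lift ord_max k)) i')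
  (fm_rows (A^~ ord_max) b).
- by left; exact: (@fm_lift_primal d I A b x' hx').
- by right; exact: (@fm_lift_dual d I A b y' y'_ge0 y'A y'b).
Qed.

Lemma farkas (I K : finType) (A : I -> K -> R) (b : I -> R) :
  (exists x, forall i, \sum_k A i k * x k <= b i) \/
  (exists y : I -> R, [/\ forall i, 0 <= y i, forall k, \sum_i y i * A i k = 0
                        & \sum_i y i * b i < 0]).
Proof.
have [[x hx]|[y [y_ge0 yA yb]]] :=
  farkas_ord (fun i (k : 'I_#|K|) => A i (enum_val k)) b.
  left; exists (fun k => x (enum_rank k)) => i.
  rewrite (reindex (@enum_val K predT)) /=; last exact/onW_bij/enum_val_bij.
  by under eq_bigr do rewrite enum_valK.
by right; exists y; split => // k; rewrite -(enum_rankK k) yA.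
Qed.

End LinearDuality.

Definition lottery (R : numDomainType) (I : finType) (p : I -> R) : Prop :=
  (forall i, 0 <= p i) /\ \sum_i p i = 1.

Section Minimax.
Variables (R : realFieldType) (I J : finType) (M : I -> J -> R) (v : R) (i0 : I).
Hypothesis best_reply : forall y : J -> R, lottery y ->
  exists2 x : I -> R, lottery x & \sum_i \sum_j x i * y j * M i j <= v.

Lemma best_reply_bound (y : J -> R) (sigma : R) :
  (forall j, 0 <= y j) -> (forall i, sigma <= \sum_j y j * M i j) ->
  sigma <= v * \sum_j y j.
Proof.
move=> y_ge0 y_lower; set Y := \sum_j y j.
have Y_ge0 : 0 <= Y by exact: sumr_ge0.
have [Y0|Y_neq0] := eqVneq Y 0.
  have y0 j : y j = 0 by apply: (psumr_eq0P (fun j _ => y_ge0 j) Y0).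
  by have := y_lower i0; rewrite Y0 mulr0 big1 // => j _; rewrite y0 mul0r.
have Y_gt0 : 0 < Y by rewrite lt_def Y_neq0.
have [|x [x_ge0 x1] xv] := best_reply (y := fun j => y j / Y).
  by split=> [j|]; rewrite ?divr_ge0 // -mulr_suml mulfV.
rewrite -ler_pdivrMr //; apply: le_trans xv.
rewrite -[sigma / Y]mul1r -x1 mulr_suml; apply: ler_sum => i _.
under eq_bigr do rewrite -mulrA.
rewrite -mulr_sumr ler_wpM2l //.
under eq_bigr do rewrite mulrAC.
by rewrite -mulr_suml ler_pM2r ?invr_gt0.
Qed.

Lemma minimax : exists2 x : I -> R, lottery x & forall j, \sum_i x i * M i j <= v.
Proof.
pose A (r : (J + I) + bool) (i : I) : R :=
  match r with
  | inl (inl j) => M i j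
  | inl (inr i') => if i == i' then -1 else 0
  | inr true => 1
  | inr false => -1
  end.
pose b (r : (J + I) + bool) : R :=
  match r with inl (inl _) => v | inl (inr _) => 0 | inr true => 1 | inr false => -1 end.
have [[x hx]|[y [y_ge0 yA yb]]] := farkas A b.
  exists x; first split.
  - by move=> i; have := hx (inl (inr i)); rewrite sum_delta_mul mulN1r oppr_le0.
  - apply/eqP; rewrite eq_le; apply/andP; split.
      by have := hx (inr true); under eq_bigr do rewrite mul1r.
    by have := hx (inr false); under eq_bigr do rewrite mulN1r; rewrite sumrN lerN2.
  - by move=> j; have := hx (inl (inl j)) => /=; under eq_bigr do rewrite mulrC.
pose sigma := y (inr false) - y (inr true).
have y_lower i : sigma <= \sum_j y (inl (inl j)) * M i j.
  have := yA i; rewrite !big_sumType big_bool /=.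
  under [X in _ + X + _]eq_bigr do rewrite eq_sym mulrC.
  rewrite sum_delta_mul mulN1r mulr1 mulrN1 => sum0.
  have := y_ge0 (inl (inr i)); rewrite /sigma; lra.
have := best_reply_bound (fun j => y_ge0 (inl (inl j))) y_lower.
move: yb; rewrite !big_sumType big_bool /= [X in _ + X + _]big1 => [|i _]; last by rewrite mulr0.
by rewrite mulr_sumr; under eq_bigr do rewrite mulrC; rewrite /sigma; lra.
Qed.

End Minimax.

Definition mass_below (R : numDomainType) (C : finType) (lt : rel C) (p : C -> R) (a : C) : R :=
  \sum_b p b * (lt a b)%:R.

Lemma ind_lt_add_le1 (R : numDomainType) (C : finType) (lt : rel C) (a b : C) :
  irreflexive lt -> transitive lt -> (lt a b)%:R + (lt b a)%:R <= 1 :> R.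
Proof.
move=> irr tr; case ab: (lt a b); case ba: (lt b a); rewrite ?addr0 ?add0r //.
by have := tr _ _ _ ab ba; rewrite irr.
Qed.

(* Since at most one of [lt a b] and [lt b a] holds, the double sum of
   [Z a * Z b * (1 - lt a b)] is at least half of [(\sum_a Z a) ^+ 2]. *)
Lemma weighted_mass_below_le (R : realFieldType) (C : finType) (lt : rel C) (x Z : C -> R) :
  irreflexive lt -> transitive lt ->
  (forall a, 0 <= Z a) -> (forall a, Z a <= x a) -> \sum_b x b = 1 ->
  \sum_a Z a * mass_below lt x a <= \sum_a Z a - (\sum_a Z a) ^+ 2 / 2.
Proof.
move=> irr tr Z_ge0 Z_le x1.
pose W := \sum_a \sum_b Z a * Z b * (1 - (lt a b)%:R).
have slackE : \sum_a Z a - \sum_a Z a * mass_below lt x a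
              = \sum_a \sum_b Z a * x b * (1 - (lt a b)%:R).
  rewrite -sumrB; apply: eq_bigr => a _.
  under eq_bigr do rewrite mulrBr mulr1.
  rewrite sumrB -mulr_sumr x1 mulr1 /mass_below mulr_sumr.
  by congr (_ - _); apply: eq_bigr => b _; rewrite mulrA.
have W_le : W <= \sum_a \sum_b Z a * x b * (1 - (lt a b)%:R).
  apply: ler_sum => a _; apply: ler_sum => b _.
  have ind_le1 : 0 <= 1 - (lt a b)%:R :> R by case: (lt a b); rewrite ?subrr ?subr0.
  by rewrite ler_wpM2r // ler_wpM2l.
have W_ge : (\sum_a Z a) ^+ 2 <= 2 * W.
  have -> : 2 * W = W + \sum_a \sum_b Z a * Z b * (1 - (lt b a)%:R).
    rewrite mulr_natl mulr2n; congr (_ + _); rewrite /W exchange_big.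
    by apply: eq_bigr => a _; apply: eq_bigr => b _; rewrite [Z b * Z a]mulrC.
  rewrite /W -big_split expr2 mulr_suml; apply: ler_sum => a _.
  rewrite -big_split mulr_sumr; apply: ler_sum => b _ /=.
  rewrite -mulrDr -[leLHS]mulr1 ler_wpM2l ?mulr_ge0 //.
  by have := ind_lt_add_le1 R a b irr tr; lra.
have : (\sum_a Z a) ^+ 2 / 2 <= W by rewrite ler_pdivrMr // mulrC.
by rewrite -slackE in W_le; lra.
Qed.

Lemma sqr_sumr_div_card_le (R : realFieldType) (V : finType) (mu : V -> R) :
  (0 < #|V|)%N -> (\sum_v mu v) ^+ 2 / #|V|%:R <= \sum_v mu v ^+ 2.
Proof.
move=> V_gt0; have n_gt0 : 0 < #|V|%:R :> R by rewrite ltr0n.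
pose m := (\sum_v mu v) / #|V|%:R.
have : 0 <= \sum_v (mu v - m) ^+ 2 by apply: sumr_ge0 => v _; apply: sqr_ge0.
under eq_bigr do rewrite sqrrB.
rewrite big_split sumrB /= sumr_const sumrMnl -mulr_suml.
have -> : m ^+ 2 *+ #|V| = (\sum_v mu v) * m by rewrite /m -mulr_natr; field; rewrite gt_eqF.
by rewrite /m expr2 mulrA; lra.
Qed.

Section LotteryExistence.
Variables (R : realFieldType) (V C : finType) (pref : V -> rel C) (t : nat).
Hypotheses (pref_order : election pref) (V_gt0 : (0 < #|V|)%N).

(* The zero-sum game in which the column player picks a candidate [a] and a
   [t]-set [T] of voters, the row player picks a candidate [b], and the row
   player pays the number of voters of [T] who rank [a] above [b]. *)
Let tset := {T : {set V} | #|T| == t}.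
Let wins (b : C) (j : C * tset) : R := \sum_v (v \in val j.2)%:R * (pref v j.1 b)%:R.
Let marginal (y : C * tset -> R) (a : C) : R := \sum_T y (a, T).

Lemma marginal_lottery (y : C * tset -> R) : lottery y -> lottery (marginal y).
Proof.
case=> y_ge0 y1; split=> [a|]; first by apply: sumr_ge0.
by rewrite -y1 pair_bigA; apply: eq_bigr => -[].
Qed.

Lemma marginal_reply_payoff (y : C * tset -> R) : lottery y ->
  \sum_b \sum_j marginal y b * y j * wins b j <= t%:R - t%:R ^+ 2 / (2 * #|V|%:R).
Proof.
move=> y_lottery; have [y_ge0 y1] := y_lottery.
have [x_ge0 x1] := marginal_lottery y_lottery; set x := marginal y in x_ge0 x1 *.
pose Z a v := \sum_T y (a, T) * (v \in val T)%:R.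
pose mu v := \sum_a Z a v.
have payoffE : \sum_b \sum_j x b * y j * wins b j
               = \sum_v \sum_a Z a v * mass_below (pref v) x a.
  transitivity (\sum_j \sum_v \sum_b y j * x b * ((v \in val j.2)%:R * (pref v j.1 b)%:R)).
    rewrite exchange_big; apply: eq_bigr => j _.
    under eq_bigr do rewrite mulr_sumr.
    by rewrite exchange_big; apply: eq_bigr => v _; apply: eq_bigr => b _; ring.
  rewrite exchange_big; apply: eq_bigr => v _.
  under [RHS]eq_bigr do rewrite mulr_suml.
  rewrite [in RHS]pair_bigA; apply: eq_bigr => -[a T] _ /=.
  by rewrite /mass_below !mulr_sumr; apply: eq_bigr => b _; ring.
have voter_le v : \sum_a Z a v * mass_below (pref v) x a <= mu v - mu v ^+ 2 / 2.
  have [irr tr _] := pref_order v.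
  apply: weighted_mass_below_le => // a.
    by apply: sumr_ge0 => T _; rewrite mulr_ge0 ?ler0n.
  by apply: ler_sum => T _; rewrite ler_piMr //; case: (_ \in _).
have mu_sum : \sum_v mu v = t%:R.
  rewrite /mu exchange_big /=.
  transitivity (\sum_a \sum_T y (a, T) * t%:R).
    apply: eq_bigr => a _; rewrite exchange_big; apply: eq_bigr => T _ /=.
    rewrite -mulr_sumr; congr (_ * _); rewrite -[in RHS](eqP (valP T)).
    rewrite -sum1_card natr_sum [RHS]big_mkcond.
    by apply: eq_bigr => v _; case: (_ \in _).
  rewrite pair_bigA -mulr_suml -[RHS]mul1r; congr (_ * _).
  by rewrite -y1; apply: eq_bigr => -[].
have := sqr_sumr_div_card_le mu V_gt0.
rewrite payoffE mu_sum => mu_sqr.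
apply: le_trans (ler_sum _ (fun v _ => voter_le v)) _.
rewrite sumrB -mulr_suml mu_sum invfM mulrA mulrAC.
by apply: lerB => //; rewrite ler_pM2r ?invr_gt0.
Qed.

Lemma ex_lottery (c0 : C) : exists2 p : C -> R, lottery p &
  forall a (T : {set V}), #|T| = t ->
    \sum_(v in T) mass_below (pref v) p a <= t%:R - t%:R ^+ 2 / (2 * #|V|%:R).
Proof.
have [|p p_lottery p_le] :=
  minimax (M := wins) (v := t%:R - t%:R ^+ 2 / (2 * #|V|%:R)) c0.
  move=> y y_lottery; exists (marginal y); first exact: marginal_lottery.
  exact: marginal_reply_payoff.
exists p => // a T /eqP T_card; have := p_le (a, exist _ T T_card).
under eq_bigr do rewrite mulr_sumr.
rewrite exchange_big [X in _ -> X <= _]big_mkcond /=; congr (_ <= _).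
apply: eq_bigr => v _; rewrite /mass_below; case: (v \in T).
  by apply: eq_bigr => b _; rewrite mul1r.
by rewrite big1 // => b _; rewrite mul0r mulr0.
Qed.

End LotteryExistence.

Section StrictOrder.
Variables (C : finType) (lt : rel C).

Lemma ex_best_in (S : {set C}) : irreflexive lt -> transitive lt -> S != set0 ->
  exists2 s, s \in S & forall s', s' \in S -> ~~ lt s' s.
Proof.
move=> irr tr /set0Pn[s0 s0S].
pose rank c := #|[set c' | lt c' c]|.
have rank_lt c c' : lt c' c -> (rank c' < rank c)%N.
  move=> c'c; apply/proper_card/properP; split; last by exists c'; rewrite !inE ?irr.
  by apply/subsetP => e; rewrite !inE => /tr; apply.
have [s sS s_min] := arg_minnP rank s0S.
by exists s => // s' /s_min; apply: contraTN => /rank_lt; rewrite ltnNge.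
Qed.

Hypothesis lt_order : strict_linear_order lt.

Lemma strict_asym (a b : C) : lt a b -> lt b a = false.
Proof.
by have [irr tr _] := lt_order; move=> ab; apply/negbTE/negP => /(tr _ _ _ ab); rewrite irr.
Qed.

Lemma prefers_to_all_best (c : C) (S : {set C}) (s : C) :
  s \in S -> (forall s', s' \in S -> ~~ lt s' s) -> prefers_to_all lt c S = lt c s.
Proof.
have [_ tr tot] := lt_order; move=> sS s_best.
apply/forall_inP/idP => [|cs b bS]; first exact.
have [-> //|bs] := eqVneq b s; apply: tr cs _.
by move: (tot _ _ bs) (s_best b bS) => /orP[->|].
Qed.

Lemma telescope_below_in (R : zmodType) (p : C -> R) (G : R -> R) (D : {set C}) :
  \sum_(b in D) (G (\sum_(c in D | lt b c) p c + p b) - G (\sum_(c in D | lt b c) p c))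
  = G (\sum_(c in D) p c) - G 0.
Proof.
have [irr tr tot] := lt_order.
move: {2}#|D| (erefl #|D|) => n; elim: n D => [|n IHn] D D_card.
  by move/eqP: D_card; rewrite cards_eq0 => /eqP ->; rewrite !big_set0 subrr.
have [|m mD m_top] := ex_best_in (S := D) irr tr.
  by rewrite -card_gt0 D_card.
have below_m : \sum_(c in D | lt m c) p c = \sum_(c in D :\ m) p c.
  apply: eq_bigl => c; rewrite !inE.
  have [->|cm] /= := eqVneq c m; first by rewrite irr andbF.
  have [cD|] //= := boolP (c \in D).
  by have := tot _ _ cm; rewrite (negbTE (m_top c cD)).
have below_b b : b \in D :\ m -> \sum_(c in D | lt b c) p c = \sum_(c in D :\ m | lt b c) p c.
  move=> bDm; apply: eq_bigl => c; rewrite !inE.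
  have [-> /=|//] := eqVneq c m; rewrite mD; apply/negbTE/m_top.
  by move: bDm; rewrite !inE => /andP[].
rewrite (bigD1 m) //= [in RHS](bigD1 m) //= below_m.
rewrite (eq_bigl (mem (D :\ m))) => [|b]; last by rewrite !inE andbC.
under eq_bigr => b bDm do rewrite (below_b b bDm).
rewrite IHn; last by rewrite (cardsD1 m D) mD in D_card; case: D_card.
rewrite (eq_bigl (mem (D :\ m))) => [|b]; last by rewrite !inE andbC.
by rewrite [p m + _]addrC addrA subrK.
Qed.

Lemma telescope_below (R : zmodType) (p : C -> R) (G : R -> R) :
  \sum_b (G (\sum_(c | lt b c) p c + p b) - G (\sum_(c | lt b c) p c))
  = G (\sum_c p c) - G 0.
Proof.
have sum_setT (F : C -> R) : \sum_(c in [set: C]) F c = \sum_c F c.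
  by apply: eq_bigl => c; rewrite in_setT.
have sum_setT_cond (P : pred C) (F : C -> R) :
    \sum_(c in [set: C] | P c) F c = \sum_(c | P c) F c.
  by apply: eq_bigl => c; rewrite in_setT.
have := telescope_below_in p G [set: C].
by rewrite !sum_setT; under eq_bigr do rewrite !sum_setT_cond.
Qed.

End StrictOrder.

Section TailArea.
Variables (R : realFieldType) (k : nat).

Lemma amgm_powS (a b : R) : 0 <= a -> 0 <= b ->
  k.+1%:R * a * b ^+ k <= a ^+ k.+1 + k%:R * b ^+ k.+1.
Proof.
move=> a_ge0 b_ge0; rewrite -subr_ge0; elim: k => [|n IHn].
  by rewrite expr0 expr1 mulr1 mul1r mul0r addr0 subrr.
have -> : a ^+ n.+2 + n.+1%:R * b ^+ n.+2 - n.+2%:R * a * b ^+ n.+1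
  = a * (a ^+ n.+1 + n%:R * b ^+ n.+1 - n.+1%:R * a * b ^+ n)
    + n.+1%:R * b ^+ n * (a - b) ^+ 2.
  by rewrite !exprS -!natr1; ring.
apply: addr_ge0; first exact: mulr_ge0.
by rewrite mulr_ge0 ?sqr_ge0 // mulr_ge0 ?ler0n ?exprn_ge0.
Qed.

(* For [u <= d], [tail_area d u] is the integral of [(d - s) * k * s ^ (k - 1)]
   over [[u, d]]. *)
Definition tail_area (d u : R) : R :=
  d ^+ k.+1 / k.+1%:R - d * u ^+ k + k%:R * u ^+ k.+1 / k.+1%:R.

Lemma tail_area_id (d : R) : tail_area d d = 0.
Proof. by rewrite /tail_area exprS -[k.+1%:R]natr1; field; rewrite natr1 pnatr_eq0. Qed.

Lemma tail_area0 (d : R) : (0 < k)%N -> tail_area d 0 = d ^+ k.+1 / k.+1%:R.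
Proof.
by move=> k_gt0; rewrite /tail_area !expr0n /= gtn_eqF //= !(mulr0, mul0r, subr0, addr0).
Qed.

Lemma tail_areaB_ge (d a b : R) : 0 <= b -> b <= a ->
  (d - a) * (a ^+ k - b ^+ k) <= tail_area d b - tail_area d a.
Proof.
move=> b_ge0 ba; rewrite -subr_ge0.
have -> : tail_area d b - tail_area d a - (d - a) * (a ^+ k - b ^+ k)
  = (a ^+ k.+1 + k%:R * b ^+ k.+1 - k.+1%:R * a * b ^+ k) / k.+1%:R.
  by rewrite /tail_area !exprS -[k.+1%:R]natr1; field; rewrite natr1 pnatr_eq0.
by rewrite divr_ge0 // subr_ge0 amgm_powS // (le_trans b_ge0).
Qed.

Lemma tail_area_ge0 (d u : R) : 0 <= u -> u <= d -> 0 <= tail_area d u.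
Proof.
by move=> u_ge0 ud; have := tail_areaB_ge d u_ge0 ud; rewrite subrr mul0r tail_area_id subr0.
Qed.

Lemma excess_mul_powB_le (d a b : R) : 0 <= d -> 0 <= b -> b <= a ->
  Num.max (d - a) 0 * (a ^+ k - b ^+ k)
  <= tail_area d (Num.min b d) - tail_area d (Num.min a d).
Proof.
move=> d_ge0 b_ge0 ba; have [da|ad] := leP d a.
  have -> : Num.max (d - a) 0 = 0 by apply/max_idPr; rewrite subr_le0.
  by rewrite mul0r tail_area_id subr0 tail_area_ge0 ?ge_min ?lexx ?orbT // le_min b_ge0.
have -> : Num.max (d - a) 0 = d - a by apply/max_idPl; rewrite subr_ge0 ltW.
have -> : Num.min b d = b by apply/min_idPl; rewrite (le_trans ba) ?ltW.
exact: tail_areaB_ge.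
Qed.

End TailArea.

Definition excess (R : numDomainType) (C : finType) (lt : rel C) (p : C -> R) (d : R)
    (S : {set C}) : R :=
  Num.max (\sum_(c | prefers_to_all lt c S) p c - (1 - d)) 0.

Section RandomCommittee.
Variables (R : realFieldType) (C : finType) (lt : rel C) (k : nat).
Hypotheses (lt_order : strict_linear_order lt) (k_gt0 : (0 < k)%N).

Lemma sum_prod_forall (p : C -> R) (P : pred C) :
  \sum_(f : {ffun 'I_k -> C}) (\prod_i p (f i)) * [forall i, P (f i)]%:R
  = (\sum_(c | P c) p c) ^+ k.
Proof.
have -> : \sum_(c | P c) p c = \sum_c (if P c then p c else 0) by rewrite big_mkcond.
rewrite -[in RHS](card_ord k) -prodr_const bigA_distr_bigA /=.
apply: eq_bigr => f _; have [allP|/forallPn[i0 Pi0]] := boolP [forall i, P (f i)].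
  by rewrite mulr1; apply: eq_bigr => i _; rewrite (forallP allP).
by rewrite mulr0 (bigD1 i0) //= (negbTE Pi0) mul0r.
Qed.

Lemma best_draw_indicator (f : 'I_k -> C) (i0 : 'I_k) :
  (forall i, ~~ lt (f i) (f i0)) -> forall b,
  [forall i, ~~ lt (f i) b]%:R - [forall i, lt b (f i)]%:R = (b == f i0)%:R :> R.
Proof.
have [irr tr tot] := lt_order; move=> f_best b.
have [->|b_s] := eqVneq b (f i0).
  rewrite (introT forallP f_best); suff /negbTE-> : ~~ [forall i, lt (f i0) (f i)] by rewrite subr0.
  by apply/forallPn; exists i0; rewrite irr.
case/orP: (tot _ _ b_s) => [b_above|s_above].
  suff [-> ->] : [forall i, ~~ lt (f i) b] /\ [forall i, lt b (f i)] by rewrite subrr.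
  split; apply/forallP => i.
    by apply/negP => /tr/(_ b_above); apply/negP/f_best.
  have [-> //|fi_s] := eqVneq (f i) (f i0).
  by move: (tot _ _ fi_s); rewrite (negbTE (f_best i)) => /= /(tr _ _ _ b_above).
suff [/negbTE-> /negbTE->] : ~~ [forall i, ~~ lt (f i) b] /\ ~~ [forall i, lt b (f i)].
  by rewrite subrr.
by split; apply/forallPn; exists i0; rewrite ?negbK // (strict_asym lt_order s_above).
Qed.

(* The best member of the draw is [b] with probability
   [(mass not above b) ^+ k - (mass below b) ^+ k]. *)
Lemma expected_fun_mass_above (p : C -> R) (g : R -> R) :
  \sum_(f : {ffun 'I_k -> C}) (\prod_i p (f i)) *
    g (\sum_(c | prefers_to_all lt c (f @: [set: 'I_k])) p c)
  = \sum_b g (\sum_(c | lt c b) p c) *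
      ((\sum_(c | ~~ lt c b) p c) ^+ k - (\sum_(c | lt b c) p c) ^+ k).
Proof.
have [irr tr _] := lt_order.
transitivity (\sum_(f : {ffun 'I_k -> C}) (\prod_i p (f i)) * \sum_b g (\sum_(c | lt c b) p c)
               * ([forall i, ~~ lt (f i) b]%:R - [forall i, lt b (f i)]%:R)).
  apply: eq_bigr => f _; congr (_ * _).
  have [|s /imsetP[i0 _ ->] s_best] := ex_best_in (S := f @: [set: 'I_k]) irr tr.
    by apply/set0Pn; exists (f (Ordinal k_gt0)); rewrite imset_f.
  have f_best i : ~~ lt (f i) (f i0) by rewrite s_best ?imset_f.
  under [RHS]eq_bigr do rewrite (best_draw_indicator f_best).
  rewrite [RHS](bigD1 (f i0)) //= eqxx mulr1 [X in _ + X]big1 ?addr0; last first.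
    by move=> b /negbTE ->; rewrite mulr0.
  congr g; apply: eq_bigl => c.
  by rewrite (prefers_to_all_best lt_order c (imset_f _ (in_setT i0)) s_best).
under eq_bigr do rewrite mulr_sumr.
rewrite exchange_big; apply: eq_bigr => b _.
under eq_bigr do rewrite mulrCA mulrBr.
by rewrite -mulr_sumr sumrB (sum_prod_forall p (fun c => ~~ lt c b)) (sum_prod_forall p (lt b)).
Qed.

Lemma expected_excess_le (p : C -> R) (d : R) : lottery p -> 0 <= d <= 1 ->
  \sum_(f : {ffun 'I_k -> C}) (\prod_i p (f i)) * excess lt p d (f @: [set: 'I_k])
  <= d ^+ k.+1 / k.+1%:R.
Proof.
have [irr tr tot] := lt_order; move=> [p_ge0 p1] /andP[d_ge0 d_le1].
rewrite (expected_fun_mass_above p (fun u => Num.max (u - (1 - d)) 0)).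
pose below b := \sum_(c | lt b c) p c.
have notaboveE b : \sum_(c | ~~ lt c b) p c = below b + p b.
  rewrite (bigD1 b) ?irr //= addrC; congr (_ + _); apply: eq_bigl => c.
  have [->|cb] := eqVneq c b; first by rewrite irr andbF.
  rewrite /= andbT; case/orP: (tot _ _ cb) => [c_above|b_above].
    by rewrite c_above (strict_asym lt_order c_above).
  by rewrite b_above (strict_asym lt_order b_above).
have aboveE b : \sum_(c | lt c b) p c - (1 - d) = d - (below b + p b).
  rewrite -notaboveE -p1 [X in _ - (X - _)](bigID (fun c => lt c b)) /=; ring.
pose G u := tail_area k d (Num.min u d).
apply: (@le_trans _ _ (\sum_b (G (below b) - G (below b + p b)))).
  apply: ler_sum => b _; rewrite aboveE notaboveE.
  by apply: excess_mul_powB_le => //; [apply: sumr_ge0 | rewrite lerDl].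
rewrite -[leLHS]opprK -sumrN.
under eq_bigr do rewrite opprB.
rewrite telescope_below // p1 opprB /G (min_idPr d_le1) (min_idPl d_ge0).
by rewrite tail_area_id subr0 tail_area0.
Qed.

End RandomCommittee.

Lemma ex_le_mean (R : realFieldType) (I : finType) (w F : I -> R) :
  lottery w -> exists i, F i <= \sum_j w j * F j.
Proof.
case=> w_ge0 w1; case: (pickP (xpredT : pred I)) => [i0 _|I0]; last first.
  by move: w1; rewrite big_pred0 // => /eqP; rewrite eq_sym oner_eq0.
have [i _ F_min] := arg_minP F (isT : xpredT i0).
exists i; rewrite -[F i]mul1r -w1 mulr_suml; apply: ler_sum => j _.
by rewrite ler_wpM2l ?F_min.
Qed.

Lemma lottery_draws (R : realFieldType) (C : finType) (p : C -> R) (k : nat) :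
  lottery p -> lottery (fun f : {ffun 'I_k -> C} => \prod_i p (f i)).
Proof.
case=> p_ge0 p1; split=> [f|]; first exact: prodr_ge0.
by rewrite -(bigA_distr_bigA (fun (i : 'I_k) c => p c)) /= big1.
Qed.

Lemma ex_draw_small_excess (R : realFieldType) (V C : finType) (pref : V -> rel C)
    (p : C -> R) (k : nat) (x : R) :
  election pref -> lottery p -> (0 < k)%N -> 0 <= x <= 1 ->
  exists f : {ffun 'I_k -> C},
    \sum_v excess (pref v) p x (f @: [set: 'I_k]) <= #|V|%:R * (x ^+ k.+1 / k.+1%:R).
Proof.
move=> pref_order p_lottery k_gt0 x01.
have [f f_le] := ex_le_mean
  (fun f : {ffun 'I_k -> C} => \sum_v excess (pref v) p x (f @: [set: 'I_k]))
  (lottery_draws k p_lottery).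
exists f; apply: le_trans f_le _.
have -> : #|V|%:R * (x ^+ k.+1 / k.+1%:R) = \sum_(v : V) x ^+ k.+1 / k.+1%:R.
  by rewrite sumr_const mulr_natl.
under eq_bigr do rewrite mulr_sumr.
rewrite exchange_big; apply: ler_sum => v _.
exact: expected_excess_le.
Qed.

Lemma sub_excess_le_mass_below (R : realFieldType) (C : finType) (lt : rel C)
    (p : C -> R) (x : R) (a : C) (S : {set C}) :
  strict_linear_order lt -> lottery p -> prefers_to_all lt a S ->
  x - excess lt p x S <= mass_below lt p a.
Proof.
move=> [irr tr tot] [p_ge0 p1] /forall_inP a_above.
have below_a b : ~~ prefers_to_all lt b S -> lt a b.
  case/forall_inPn => s sS /negP b_s; have [->|bs] := eqVneq b s; first exact: a_above.
  by move: (tot _ _ bs) => /orP[//|/(tr _ _ _ (a_above s sS))].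
have split1 : \sum_(b | prefers_to_all lt b S) p b
              + \sum_(b | ~~ prefers_to_all lt b S) p b = 1.
  by rewrite -p1 [RHS](bigID (prefers_to_all lt ^~ S)).
have excess_ge : \sum_(b | prefers_to_all lt b S) p b - (1 - x) <= excess lt p x S.
  by rewrite /excess le_max lexx.
apply: (@le_trans _ _ (\sum_(b | ~~ prefers_to_all lt b S) p b)); first lra.
rewrite big_mkcond; apply: ler_sum => b _.
by case: ifP => [/below_a -> | _]; rewrite ?mulr1 // mulr_ge0 ?ler0n.
Qed.

Lemma excess_sum_bound (R : realFieldType) (V C : finType) (pref : V -> rel C)
    (p : C -> R) (x : R) (S0 : {set C}) (a : C) (T : {set V}) :
  election pref -> lottery p -> (forall v, v \in T -> prefers_to_all (pref v) a S0) ->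
  #|T|%:R * x - \sum_v excess (pref v) p x S0 <= \sum_(v in T) mass_below (pref v) p a.
Proof.
move=> pref_order p_lottery T_above.
have excess_ge0 v : 0 <= excess (pref v) p x S0 by rewrite le_max lexx orbT.
apply: (@le_trans _ _ (\sum_(v in T) (x - excess (pref v) p x S0))).
  rewrite sumrB sumr_const mulr_natl lerB // [leRHS](bigID (mem T)) /= lerDl.
  exact: sumr_ge0.
by apply: ler_sum => v /T_above; apply: sub_excess_le_mass_below.
Qed.

Lemma ex_subset_card (T : finType) (A : {set T}) (m : nat) :
  (m <= #|A|)%N -> exists2 B : {set T}, B \subset A & #|B| = m.
Proof.
elim: m => [_|m IHm m_le]; first by exists set0; rewrite ?sub0set ?cards0.
have [B BA B_card] := IHm (ltnW m_le).
have /subsetPn[y yA yB] : ~~ (A \subset B).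
  by apply: contraTN m_le => /subset_leq_card; rewrite B_card -ltnNge.
by exists (y |: B); rewrite ?subUset ?sub1set ?yA ?BA // cardsU1 yB B_card.
Qed.

Lemma ex_superset_card (T : finType) (S0 : {set T}) (k : nat) :
  (#|S0| <= k <= #|T|)%N -> exists2 S : {set T}, S0 \subset S & #|S| = k.
Proof.
case/andP=> S0_le k_le.
have [|B BC B_card] := @ex_subset_card _ (~: S0) (k - #|S0|).
  by rewrite [#|~: S0|]cardsCs setCK leq_sub2r.
exists (S0 :|: B); first exact: subsetUl.
rewrite cardsU B_card (_ : S0 :&: B = set0) ?cards0 ?subn0 ?subnKC //.
by apply/disjoint_setI0; rewrite disjoint_sym disjoints_subset.
Qed.

Lemma prefers_to_all_subset (C : finType) (lt : rel C) (a : C) (S0 S : {set C}) :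
  S0 \subset S -> prefers_to_all lt a S -> prefers_to_all lt a S0.
Proof. by move=> /subsetP S0S /forall_inP a_above; apply/forall_inP => b /S0S /a_above. Qed.

Lemma ex_undominated1 (R : realType) (k : nat) (V C : finType) (pref : V -> rel C) :
  (0 < #|V|)%N -> (0 < k <= #|C|)%N -> election pref ->
  exists2 S : {set C}, #|S| = k & undominated pref (1 : R) S.
Proof.
move=> V_gt0 /andP[k_gt0 k_le] pref_order; have [v0 _] := card_gt0P V_gt0.
have [irr tr _] := pref_order v0.
have [|b0 _ b0_top] := ex_best_in (S := [set: C]) irr tr.
  by apply/set0Pn; exists (enum_val (Ordinal (leq_trans k_gt0 k_le))); rewrite in_setT.
have [|S b0S S_card] := @ex_superset_card _ [set b0] k; first by rewrite cards1 k_gt0.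
exists S => // a; rewrite /dom_frac ltr_pdivrMr ?ltr0n // mul1r ltr_nat.
apply: (@leq_ltn_trans #|[set~ v0]|); last by rewrite cardsC1 ltn_predL.
apply/subset_leq_card/subsetP => v; rewrite !inE; apply: contraTN => /eqP->.
by apply/forall_inP => /(_ b0 (subsetP b0S _ (set11 b0))); apply/negP/b0_top; rewrite in_setT.
Qed.

Lemma ex_root_gap (R : realType) (k : nat) (alpha : R) :
  (0 < k)%N -> 0 < alpha < 1 -> 2 / k.+1%:R <= alpha / (1 - ln alpha) ->
  exists2 x : R, 0 <= x <= 1 & alpha * (1 - x) + x ^+ k.+1 / k.+1%:R < alpha ^+ 2 / 2.
Proof.
move=> k_gt0 /andP[alpha_gt0 alpha_lt1] cond.
have k_pos : 0 < k%:R :> R by rewrite ltr0n.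
have ln_neg : ln alpha < 0 by rewrite ln_lt0 // alpha_gt0.
(* [x = alpha ^ (1/k)], and convexity of [expR] gives [k (1 - x) < - ln alpha]. *)
pose y := ln alpha / k%:R; pose x := expR y.
have y_neg : y < 0 by rewrite pmulr_llt0 ?invr_gt0.
exists x; first by rewrite expR_ge0 ltW // expR_lt1.
have xk : x ^+ k = alpha.
  by rewrite /x -expRM_natl mulrC divfK ?gt_eqF // lnK // posrE.
have ky : k%:R * y = ln alpha by rewrite mulrC divfK ?gt_eqF.
have y_lt : y < x - 1 by have := expR_gt1Dx (ltr0_neq0 y_neg); rewrite -/x; lra.
have cond' : 2 * (1 - ln alpha) <= k.+1%:R * alpha.
  by move: cond; rewrite ler_pdivrMr ?ltr0n // mulrAC ler_pdivlMr; lra.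
have drop_lt : k.+1%:R - k%:R * x < 1 - ln alpha.
  have : k%:R * y < k%:R * (x - 1) by rewrite ltr_pM2l.
  by rewrite ky -natr1; lra.
have -> : alpha * (1 - x) + x ^+ k.+1 / k.+1%:R
          = alpha * (k.+1%:R - k%:R * x) / k.+1%:R.
  by rewrite exprS xk -natr1; field; rewrite natr1 pnatr_eq0.
rewrite ltr_pdivrMr ?ltr0n //; apply: (@lt_le_trans _ _ (alpha * (1 - ln alpha))).
  by rewrite ltr_pM2l.
by have := ler_wpM2l (ltW alpha_gt0) cond'; lra.
Qed.

Lemma scaled_gap_lt (R : realFieldType) (n t alpha c G : R) :
  0 < n -> alpha * n <= t -> 0 < alpha -> 0 <= G -> alpha * c + G < alpha ^+ 2 / 2 ->
  t * c + n * G < t ^+ 2 / (2 * n).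
Proof.
move=> n_gt0 t_ge alpha_gt0 G_ge0 gap.
have c_lt : c < alpha / 2.
  by rewrite -(ltr_pM2l alpha_gt0) mulrA -expr2; lra.
rewrite ltr_pdivlMr ?mulr_gt0 //.
pose e := t - alpha * n; have e_ge0 : 0 <= e by rewrite subr_ge0.
have -> : t = alpha * n + e by rewrite /e addrC subrK.
have : n ^+ 2 * (2 * alpha * c + 2 * G) < n ^+ 2 * alpha ^+ 2.
  by rewrite ltr_pM2l ?exprn_gt0 //; lra.
have : 0 <= n * (e * (alpha - c)).
  by apply: mulr_ge0; [exact: ltW | apply: mulr_ge0 => //; lra].
have : 0 <= e * e by rewrite mulr_ge0.
nra.
Qed.

Section Undominated.
Variables (R : realType) (V C : finType) (pref : V -> rel C) (p : C -> R).
Variables (alpha x G : R) (t : nat) (S0 : {set C}).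
Hypotheses (pref_order : election pref) (p_lottery : lottery p) (V_gt0 : (0 < #|V|)%N).
Hypotheses (alpha_gt0 : 0 < alpha) (G_ge0 : 0 <= G).
Hypothesis gap : alpha * (1 - x) + G < alpha ^+ 2 / 2.
Hypothesis t_ge : alpha * #|V|%:R <= t%:R.
Hypothesis t_min : forall t', alpha * #|V|%:R <= t'%:R -> (t <= t')%N.
Hypothesis p_bound : forall a (T : {set V}), #|T| = t ->
  \sum_(v in T) mass_below (pref v) p a <= t%:R - t%:R ^+ 2 / (2 * #|V|%:R).
Hypothesis S0_excess : \sum_v excess (pref v) p x S0 <= #|V|%:R * G.

Lemma undominated_superset (S : {set C}) : S0 \subset S -> undominated pref alpha S.
Proof.
move=> S0S a; rewrite /dom_frac ltNge; apply/negP.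
set X := [set v | prefers_to_all (pref v) a S]; rewrite ler_pdivlMr ?ltr0n // => X_ge.
have [T TX T_card] := ex_subset_card (t_min X_ge).
have T_above v : v \in T -> prefers_to_all (pref v) a S0.
  by move/(subsetP TX); rewrite inE; apply: prefers_to_all_subset.
have n_gt0 : 0 < #|V|%:R :> R by rewrite ltr0n.
have := scaled_gap_lt n_gt0 t_ge alpha_gt0 G_ge0 gap; rewrite mulrBr mulr1.
have := excess_sum_bound x pref_order p_lottery T_above; rewrite T_card.
have := p_bound a T_card; have := S0_excess.
move: (t%:R ^+ 2 / _) (\sum_(v in T) _) (\sum_v excess _ _ _ _) => q M E; lra.
Qed.
End Undominated.

Theorem theorem1 (R : realType) (k : nat) (alpha : R)
    (V C : finType) (pref : V -> rel C) :
  (0 < k)%N -> 0 < alpha -> alpha <= 1 ->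
  alpha / (1 - ln alpha) >= 2 / (k.+1)%:R ->
  (0 < #|V|)%N -> (k <= #|C|)%N ->
  election pref ->
  exists S : {set C}, #|S| = k /\ @undominated R V C pref alpha S.
Proof.
move=> k_gt0 alpha_gt0 alpha_le1 cond V_gt0 k_le pref_order.
(* For [alpha = 1] and [k = 1] the strict gap below fails, but then any
   committee containing some voter's favourite candidate will do. *)
have [->|alpha_neq1] := eqVneq alpha 1.
  by have [|S] := @ex_undominated1 R k V C pref V_gt0 _ pref_order; [rewrite k_gt0 | exists S].
have [x x01 gap] : exists2 x : R, 0 <= x <= 1 &
    alpha * (1 - x) + x ^+ k.+1 / k.+1%:R < alpha ^+ 2 / 2.
  by apply: ex_root_gap; rewrite // alpha_gt0 lt_neqAle alpha_neq1.
have [|t t_ge t_min] := ex_minnP (P := fun t => alpha * #|V|%:R <= t%:R).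
  by exists #|V|; rewrite ler_piMl ?ler0n.
have [c0 _] := card_gt0P (leq_trans k_gt0 k_le).
have [p p_lottery p_bound] := @ex_lottery R V C pref t pref_order V_gt0 c0.
have [f f_excess] := ex_draw_small_excess pref_order p_lottery k_gt0 x01.
have [|S S0S S_card] := @ex_superset_card _ (f @: [set: 'I_k]) k.
  by rewrite k_le andbT (leq_trans (leq_imset_card _ _)) // cardsT card_ord.
have G_ge0 : 0 <= x ^+ k.+1 / k.+1%:R.
  by case/andP: x01 => x_ge0 _; rewrite divr_ge0 ?exprn_ge0 ?ler0n.
exists S; split=> //; exact: (undominated_superset pref_order p_lottery V_gt0 alpha_gt0
                               G_ge0 gap t_ge t_min p_bound f_excess S0S).
Qed.
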